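(* For $k\ge 1$, rectangular reduction gives a bijection $\mathrm{red}:\mathcal M^{\Box}_{2k}\to\mathcal N_k$. In particular $M^\Box_{2k}=N_k$.
   Context: Colorings. Each square is colored water or land. Two distinct squares are adjacent if they share an edge after all edge identifications; a set of squares is connected if its induced adjacency graph is connected (empty set counts as connected). (N1): the water is connected. For an interior (non-boundary) vertex $v$, its square-degree is the number of distinct squares having $v$ as a corner. (N2$\Box$): no interior vertex of square-degree $4$ has all incident squares water. A $2\times k$ Nurikabe rectangle is a coloring of the $2\times k$ grid (no identifications) with connected water and no $2\times 2$ block of water squares; $\mathcal N_k$ is the set of these, $N_k=|\mathcal N_k|$. Tile $[0,n]\times[0,1]$ by unit squares $[j-1,j]\times[0,1]$, called square $j$. The $1\times n$ Möbius strip identifies $(x,1)\sim(n-x,0)$ for $x\in[0,n]$; its boundary is the image of the vertical sides. $\mathcal M^\Box_n$ is the set of colorings of the $1\times n$ Möbius strip satisfying (N1) and (N2$\Box$), $M^\Box_n=|\mathcal M^\Box_n|$. Rectangular reduction: for a coloring of the $1\times 2k$ Möbius strip, $\mathrm{red}$ gives the coloring of the $2\times k$ grid whose column $j$ ($1\le j\le k$) has top square colored as square $j$ and bottom square colored as square $2k+1-j$. *)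

From mathcomp Require Import all_boot.
Set Implicit Arguments. Unset Strict Implicit. Unset Printing Implicit Defensive.

(* Colorings: true = water, false = land. Squares are 0-based:
   square index i : 'I_n is the paper's square i+1, i.e. [i,i+1] x [0,1]. *)

(* Edges after identification, canonical representatives:
   (x, true)  = vertical edge {x} x [0,1];
   (x, false) = bottom horizontal edge [x,x+1] x {0}.
   The top edge [i,i+1] x {1} of square i is identified with the bottom edge
   [n-i-1, n-i] x {0}. *)
Definition mob_edges (n : nat) (i : 'I_n) : seq (nat * bool) :=
  [:: (val i, true); ((val i).+1, true); (n - (val i).+1, false); (val i, false)].

Definition mob_adj (n : nat) : rel 'I_n :=
  fun i j => (i != j) && has (fun e => e \in mob_edges j) (mob_edges i).

(* Vertices after identification, canonical representatives: the bottom
   vertex (x,0), 0 <= x <= n; the top vertex (x,1) is identified with (n-x,0).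
   Corners of square i: (i,0), (i+1,0), (i,1)~(n-i,0), (i+1,1)~(n-i-1,0). *)
Definition mob_corners (n : nat) (i : 'I_n) : seq nat :=
  [:: val i; (val i).+1; n - val i; n - (val i).+1].

(* The class of (v,0) is {(v,0),(n-v,1)}; it meets the boundary (the image of
   the vertical sides x = 0, x = n) iff v = 0 or v = n. *)
Definition mob_interior (n v : nat) : bool := (0 < v) && (v < n).

Definition mob_incident (n v : nat) : {set 'I_n} :=
  [set i : 'I_n | v \in mob_corners i].

Definition water_connected (T : finType) (adj : rel T) (c : {ffun T -> bool}) : bool :=
  [forall a, forall b, (c a && c b) ==>
     connect (fun x y => [&& c x, c y & adj x y]) a b].

Definition mob_N2box (n : nat) (c : {ffun 'I_n -> bool}) : bool :=
  [forall v : 'I_n.+1, (mob_interior n v && (#|mob_incident n v| == 4)) ==>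
     ~~ [forall i in mob_incident n v, c i]].

Definition mob_ok (n : nat) (c : {ffun 'I_n -> bool}) : bool :=
  water_connected (@mob_adj n) c && mob_N2box c.

Definition MBox (n : nat) : {set {ffun 'I_n -> bool}} := [set c | mob_ok c].

(* square (r, j): row r (0 = top, 1 = bottom), column j (0-based) *)
Definition grid_adj (k : nat) : rel ('I_2 * 'I_k) :=
  fun p q =>
    ((p.1 == q.1) && (((val p.2).+1 == val q.2) || ((val q.2).+1 == val p.2)))
    || ((p.2 == q.2) && (p.1 != q.1)).

Definition no_2x2_water (k : nat) (g : {ffun 'I_2 * 'I_k -> bool}) : bool :=
  [forall j1 : 'I_k, forall j2 : 'I_k, ((val j1).+1 == val j2) ==>
     ~~ [forall r : 'I_2, g (r, j1) && g (r, j2)]].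

Definition nuri_ok (k : nat) (g : {ffun 'I_2 * 'I_k -> bool}) : bool :=
  water_connected (@grid_adj k) g && no_2x2_water g.

Definition NRect (k : nat) : {set {ffun 'I_2 * 'I_k -> bool}} := [set g | nuri_ok g].

(* color of 0-based square m of an n-strip (m < n), default land otherwise *)
Definition sqcol (n : nat) (c : {ffun 'I_n -> bool}) (m : nat) : bool :=
  if insub m is Some i then c i else false.

(* column j (0-based): top = square j, bottom = square 2k-1-j (0-based),
   i.e. the paper's squares j+1 and 2k+1-(j+1). *)
Definition red (k : nat) (c : {ffun 'I_(k.*2) -> bool}) : {ffun 'I_2 * 'I_k -> bool} :=
  [ffun p : 'I_2 * 'I_k =>
     if val p.1 == 0 then sqcol c (val p.2) else sqcol c (k.*2 - (val p.2).+1)].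

From mathcomp Require Import all_boot zify.
Set Implicit Arguments. Unset Strict Implicit. Unset Printing Implicit Defensive.

(* Reduction is composition with the bijection [cell_square] sending cell
   (r, j) of the 2 x k grid to square j (top row) or 2k-1-j (bottom row) of the
   strip.  This bijection is a graph isomorphism for adjacency, so it preserves
   water connectivity; and the four squares around an interior vertex v != k
   of the strip are exactly the image of the 2 x 2 block over columns v-1, v
   (for v < k) or 2k-v-1, 2k-v (for v > k), while the central vertex k has
   only two incident squares, so (N2box) is the absence of 2 x 2 water blocks. *)

Definition cell_index k (r j : nat) := if r == 0 then j else k.*2 - j.+1.

Lemma cell_index_lt k r j : j < k -> cell_index k r j < k.*2.
Proof. by rewrite /cell_index; case: (r == 0); lia. Qed.

Definition cell_square {k} (p : 'I_2 * 'I_k) : 'I_(k.*2) :=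
  Ordinal (cell_index_lt p.1 (ltn_ord p.2)).

Lemma cell_square_inj k : injective (@cell_square k).
Proof.
move=> [[r1 lt_r1] [j1 lt_j1]] [[r2 lt_r2] [j2 lt_j2]] /(congr1 val).
rewrite /= /cell_index => eq_sq.
have [eq_r eq_j] : r1 = r2 /\ j1 = j2.
  by move: eq_sq; case: r1 lt_r1 => [|[|//]] _; case: r2 lt_r2 => [|[|//]] _ /=; lia.
by subst; congr pair; apply: val_inj.
Qed.

Lemma cell_square_bij k : bijective (@cell_square k).
Proof.
apply: inj_card_bij; first exact: cell_square_inj.
by rewrite card_prod !card_ord mul2n.
Qed.

Lemma sqcolE n (c : {ffun 'I_n -> bool}) m (lt_mn : m < n) :
  sqcol c m = c (Ordinal lt_mn).
Proof. by rewrite /sqcol insubT. Qed.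

Lemma redE k (c : {ffun 'I_(k.*2) -> bool}) : red c = [ffun p => c (cell_square p)].
Proof.
apply/ffunP => -[r j]; rewrite !ffunE.
have -> : (if val r == 0 then sqcol c j else sqcol c (k.*2 - j.+1))
          = sqcol c (cell_index k r j) by rewrite /cell_index; case: ifP.
exact: sqcolE.
Qed.

Lemma grid_adjE k (p q : 'I_2 * 'I_k) :
  grid_adj p q = mob_adj (cell_square p) (cell_square q).
Proof.
case: p q => [[r1 lt_r1] [j1 lt_j1]] [[r2 lt_r2] [j2 lt_j2]].
rewrite /grid_adj /mob_adj /mob_edges -!val_eqE /= /cell_index.
rewrite !in_cons !in_nil !xpair_eqE /= !orbF !andbT !andbF /= !orbF.
move: lt_j1 lt_j2; case: r1 lt_r1 => [|[|//]] _; case: r2 lt_r2 => [|[|//]] _ /=; lia.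
Qed.

Lemma water_connected_of_comp (T U : finType) (eT : rel T) (eU : rel U)
    (f : U -> T) (g : T -> U) (c : {ffun T -> bool}) :
  cancel g f -> (forall x y, eU x y -> eT (f x) (f y)) ->
  water_connected eU [ffun x => c (f x)] -> water_connected eT c.
Proof.
move=> gK hom_f wc_U; apply/forallP => a; apply/forallP => b; apply/implyP => water_ab.
have := implyP (forallP (forallP wc_U (g a)) (g b)); rewrite !ffunE !gK => /(_ water_ab).
case/connectP => p path_p last_p; apply/connectP; exists (map f p); last first.
  by rewrite -{1}(gK a) last_map -last_p gK.
rewrite -{1}(gK a) path_map; apply: sub_path path_p => x y /and3P[cx cy xy].
by rewrite !ffunE in cx cy; rewrite /= cx cy hom_f.
Qed.

Lemma water_connected_comp (T U : finType) (eT : rel T) (eU : rel U)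
    (f : U -> T) (c : {ffun T -> bool}) :
  bijective f -> (forall x y, eU x y = eT (f x) (f y)) ->
  water_connected eT c = water_connected eU [ffun x => c (f x)].
Proof.
case=> g fK gK eUT; apply/idP/idP => wc; last first.
  by apply: water_connected_of_comp gK _ wc => x y; rewrite eUT.
have hom_g x y : eT x y -> eU (g x) (g y) by rewrite eUT !gK.
apply: water_connected_of_comp fK hom_g _.
suff -> : [ffun y => [ffun x => c (f x)] (g y)] = c by [].
by apply/ffunP => y; rewrite !ffunE gK.
Qed.

Definition column_pair k (j1 j2 : 'I_k) : {set 'I_2 * 'I_k} := setX setT [set j1; j2].

Lemma card_column_pair k (j1 j2 : 'I_k) :
  j1 != j2 -> #|cell_square @: column_pair j1 j2| = 4.
Proof.
move=> neq_j; rewrite card_imset; last exact: cell_square_inj.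
by rewrite cardsX cardsT card_ord cards2 neq_j.
Qed.

Lemma all_water_column_pair k (c : {ffun 'I_(k.*2) -> bool}) (j1 j2 : 'I_k) :
  [forall i in cell_square @: column_pair j1 j2, c i]
  = [forall r, red c (r, j1) && red c (r, j2)].
Proof.
rewrite redE.
apply/forall_inP/forallP => [all_c r | all_c _ /imsetP[[r j] /setXP[_ j12] ->]].
  by rewrite !ffunE; apply/andP; split; apply: all_c; rewrite imset_f // !inE eqxx ?orbT.
by have := all_c r; rewrite !ffunE; case/set2P: j12 => -> /andP[].
Qed.

Lemma mob_incident_sym n v : v <= n -> mob_incident n (n - v) = mob_incident n v.
Proof.
move=> le_vn; apply/setP => i; rewrite !inE.
by case: i => m lt_mn /=; apply/idP/idP; lia.
Qed.

Lemma mob_incident_column k (j1 j2 : 'I_k) :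
  j1.+1 = j2 -> mob_incident (k.*2) j2 = cell_square @: column_pair j1 j2.
Proof.
move=> j12; have [g gK fK] := cell_square_bij k.
apply/setP => i; rewrite -(fK i) mem_imset; last exact: cell_square_inj.
case: (g i) => [[r lt_r] [j lt_j]]; rewrite !inE -!val_eqE /= /cell_index.
move: j12; case: j1 j2 => [j1 lt_j1] [j2 lt_j2] /= j12.
by case: r lt_r => [|[|//]] _ /=; apply/idP/idP; lia.
Qed.

Lemma card_mob_incident_mid k : #|mob_incident (k.*2) k| <= 2.
Proof.
case: k => [|k]; first by rewrite (leq_trans (max_card _)) ?card_ord.
have sub_mid : mob_incident (k.+1.*2) k.+1
               \subset [set cell_square (ord0, ord_max); cell_square (ord_max, ord_max)].
  apply/subsetP => -[m lt_m]; rewrite !inE -!val_eqE /= /cell_index /=.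
  by apply/implyP; lia.
by rewrite (leq_trans (subset_leq_card sub_mid)) // cards2; case: (_ != _).
Qed.

Lemma mob_incident_interior k v : 0 < v < k.*2 -> v != k ->
  exists j1 j2 : 'I_k,
    j1.+1 = j2 /\ mob_incident (k.*2) v = cell_square @: column_pair j1 j2.
Proof.
wlog lt_vk : v / v < k => [wlog_v v_int ne_vk | v_int _].
  case: (ltnP v k) => [lt_vk | le_kv]; first exact: wlog_v.
  have le_vn : v <= k.*2 by lia.
  by rewrite -(mob_incident_sym le_vn); apply: wlog_v; lia.
have lt_v1k : v.-1 < k by lia.
have adj_cols : (Ordinal lt_v1k).+1 = Ordinal lt_vk by rewrite /=; lia.
by exists (Ordinal lt_v1k), (Ordinal lt_vk); rewrite -mob_incident_column.
Qed.

Lemma mob_N2box_red k (c : {ffun 'I_(k.*2) -> bool}) :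
  mob_N2box c = no_2x2_water (red c).
Proof.
apply/forallP/forallP => [N2 j1 | no22 v].
  apply/forallP => j2; apply/implyP => /eqP j12.
  have {}j12 : (j1 : nat).+1 = j2 := j12.
  have lt_j2k : j2 < k := ltn_ord j2.
  have lt_j2 : j2 < (k.*2).+1 by lia.
  have neq_j : j1 != j2 by rewrite -val_eqE /= -j12 neq_ltn ltnSn.
  have := implyP (N2 (Ordinal lt_j2)).
  rewrite /= (mob_incident_column j12) card_column_pair // all_water_column_pair.
  have -> : mob_interior (k.*2) j2 by rewrite /mob_interior; lia.
  by move=> /(_ isT).
apply/implyP => /andP[v_int card4].
have ne_vk : v != k :> nat.
  by apply: contraTneq card4 => ->; rewrite neq_ltn (leq_ltn_trans (card_mob_incident_mid k)).
have [j1 [j2 [j12 ->]]] := mob_incident_interior v_int ne_vk.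
rewrite all_water_column_pair.
exact: implyP (forallP (no22 j1) j2) (introT eqP j12).
Qed.

Lemma mob_ok_red k (c : {ffun 'I_(k.*2) -> bool}) : mob_ok c = nuri_ok (red c).
Proof.
rewrite /mob_ok /nuri_ok mob_N2box_red redE.
by rewrite (water_connected_comp _ (cell_square_bij k) (@grid_adjE k)).
Qed.

Lemma red_bij k : bijective (@red k).
Proof.
have [g gK fK] := cell_square_bij k.
exists (fun h : {ffun _ -> bool} => [ffun i => h (g i)]) => c.
  by apply/ffunP => i; rewrite redE !ffunE fK.
by apply/ffunP => p; rewrite redE !ffunE gK.
Qed.

Theorem lemma4p2 (k : nat) : 0 < k ->
  [/\ {in MBox k.*2, forall c, red c \in NRect k},
      {in MBox k.*2 &, injective (@red k)},
      (forall g, g \in NRect k -> exists2 c, c \in MBox k.*2 & red c = g)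
    & #|MBox k.*2| = #|NRect k| ].
Proof.
move=> _; have [unred redK unredK] := red_bij k.
have redP c : (red c \in NRect k) = (c \in MBox k.*2) by rewrite !inE mob_ok_red.
split=> [c | c d _ _ | g Ng | ].
- by rewrite redP.
- exact: (can_inj redK).
- by exists (unred g); rewrite // -redP unredK.
rewrite -(on_card_preimset (onW_bij _ (red_bij k))).
by apply: eq_card => c; rewrite !inE mob_ok_red.
Qed.
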